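(* Let $L,L',q\in\mathbb{N}$, $x\in\mathbb{Z}$, with $L'\leq L/\lambda(q)$. If $B\subseteq[1,L]$ and $B'\subseteq\{\ell\in[1,L']: x+\ell\lambda(q)\in B\}$, then for every $d\in\mathbb{N}$, $$\mathcal{R}_{qd}(B',L')\leq\mathcal{R}_d(B,L).$$
   Context: Let $h\in\mathbb{Z}[x]$ have degree $k\ge2$ and positive leading coefficient, and be $\mathcal{P}$-intersective: for every prime $p$ there is $z_p\in\mathbb{Z}_p$ with $h(z_p)=0$, $z_p\not\equiv0\bmod p$; fix such $z_p$. Let $s=2^k+6$. For $d\in\mathbb{N}$, $r_d$ is the unique integer in $(-d,0]$ with $r_d\equiv z_p\bmod p^{v_p(d)}$ for all primes $p\mid d$. $\lambda$ is completely multiplicative with $\lambda(p)=p^m$, $m$ the multiplicity of $z_p$ as a root of $h$. $h_d(x)=h(r_d+dx)/\lambda(d)$; $\Lambda_d=\{x\in\mathbb{N}:r_d+dx\text{ prime}\}$; $\nu_d(x)=\frac{\phi(d)}{d}\log(r_d+dx)1_{\Lambda_d}(x)$; $H_d(L)=\{y\in\mathbb{N}:0<h_d(y)<L/s\}$; and for $B\subseteq[1,L]$, $\mathcal{R}_d(B,L)=\sum_{x\in\mathbb{Z},\,y\in H_d(L)}1_B(x)1_B(x+h_d(y))\nu_d(y)$. Here $[1,L]=\{1,\dots,L\}$. *)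

From HB Require Import structures.
From mathcomp Require Import all_boot all_order all_algebra.
From mathcomp Require Import all_classical all_reals all_analysis.
Set Implicit Arguments. Unset Strict Implicit. Unset Printing Implicit Defensive.
Import Order.TTheory GRing.Theory Num.Theory.
Local Open Scope ring_scope.
Local Open Scope classical_set_scope.

Definition lam (m : nat -> nat) (d : nat) : nat :=
  (\prod_(p <- primes d) p ^ (m p * logn p d))%N.

Definition sconst (h : {poly int}) : nat := (2 ^ (size h).-1 + 6)%N.

Definition hd (h : {poly int}) (r : nat -> int) (m : nat -> nat) (d y : nat) : rat :=
  (h.[r d + d%:Z * y%:Z])%:~R / (lam m d)%:R.

Definition Hd (h : {poly int}) (r : nat -> int) (m : nat -> nat) (d L : nat) : set nat :=
  [set y | (0 < y)%N /\ 0 < hd h r m d y /\ hd h r m d y < L%:R / (sconst h)%:R].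

Definition prime_int (t : int) : bool := (0 < t) && prime `|t|%N.

Definition nu (R : realType) (r : nat -> int) (d y : nat) : R :=
  if (0 < y)%N && prime_int (r d + d%:Z * y%:Z)
  then (totient d)%:R / d%:R * ln ((r d + d%:Z * y%:Z)%:~R)
  else 0.

Definition indR (R : realType) (B : set int) (t : rat) : R :=
  if `[< exists2 z : int, t = z%:~R & B z >] then 1 else 0.

Definition Rsum (R : realType) (h : {poly int}) (r : nat -> int) (m : nat -> nat)
    (d : nat) (B : set int) (L : nat) : \bar R :=
  (\esum_(xy in [set xy : int * nat | Hd h r m d L xy.2])
     ((indR R B xy.1%:~R * indR R B (xy.1%:~R + hd h r m d xy.2) * nu R r d xy.2)%:E))%E.

From HB Require Import structures.
From mathcomp Require Import all_boot all_order all_algebra.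
From mathcomp Require Import all_classical all_reals all_analysis.
From mathcomp Require Import ring zify.
Import Order.TTheory GRing.Theory Num.Theory.
Local Open Scope ring_scope.
Local Open Scope classical_set_scope.

(* Write Q = q d.  The residues r_Q and r_d agree modulo d, since both are congruent
   to z_p modulo p^{v_p(d)}; hence r_Q + Q y = r_d + d y' with
   y' = (r_Q - r_d)/d + q y, a positive integer when y > 0.  Under this substitution
   h_d(y') = lambda(q) h_Q(y), so y |-> y' maps H_Q(L') injectively into H_d(L)
   (as lambda(q) L' <= L), and nu_Q(y) <= nu_d(y') because phi(Q)/Q <= phi(d)/d.
   Together with x' |-> x + lambda(q) x', which maps B' into B, every term of
   R_Q(B', L') is dominated by a distinct nonnegative term of R_d(B, L). *)

Lemma sum_coprime_period (d q : nat) :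
  (\sum_(0 <= i < q * d) coprime d i = q * \sum_(0 <= i < d) coprime d i)%N.
Proof.
elim: q => [|q IHq]; first by rewrite mul0n big_geq.
rewrite mulSn (big_cat_nat _ (n := (q * d)%N)) ?leq_addl //= IHq addnC; congr (_ + _)%N.
rewrite -{1}(add0n (q * d)%N) big_addn addnK; apply: eq_bigr => i _.
by rewrite -coprime_modr addnC modnMDl coprime_modr.
Qed.

Lemma totient_mul_leq (q d : nat) : (totient (q * d) <= q * totient d)%N.
Proof.
rewrite !totient_count_coprime -sum_coprime_period.
apply: leq_sum => i _; case: (boolP (coprime (q * d) i)) => // co_qd_i.
by rewrite (coprime_dvdl (dvdn_mull q (dvdnn d)) co_qd_i).
Qed.

Lemma totient_ratio_mul_le (R : numFieldType) (q d : nat) :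
  (0 < q)%N -> (0 < d)%N ->
  (totient (q * d))%:R / (q * d)%N%:R <= (totient d)%:R / d%:R :> R.
Proof.
move=> q_gt0 d_gt0; rewrite ler_pdivrMr ?ltr0n ?muln_gt0 ?q_gt0 //.
have -> : (totient d)%:R / d%:R * (q * d)%N%:R = (q * totient d)%N%:R :> R.
  by rewrite !natrM; field; rewrite pnatr_eq0 -lt0n.
by rewrite ler_nat totient_mul_leq.
Qed.

Lemma lam_gt0 (m : nat -> nat) (n : nat) : (0 < lam m n)%N.
Proof.
rewrite /lam big_seq; apply: prodn_cond_gt0 => p.
by rewrite mem_primes => /and3P[p_pr _ _]; rewrite expn_gt0 prime_gt0.
Qed.

Lemma lam_prod_nat (m : nat -> nat) (n N : nat) : (0 < n)%N -> (n < N)%N ->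
  lam m n = (\prod_(0 <= p < N) p ^ (m p * logn p n))%N.
Proof.
move=> n_gt0 n_lt_N; rewrite /lam -(filter_pi_of n_lt_N) big_filter big_mkcond /=.
apply: eq_bigr => p _; case: ifP => // p_nprime.
have /eqP -> : logn p n == 0%N by rewrite eqn0Ngt logn_gt0 p_nprime.
by rewrite muln0.
Qed.

Lemma lamM (m : nat -> nat) (q d : nat) : (0 < q)%N -> (0 < d)%N ->
  lam m (q * d) = (lam m q * lam m d)%N.
Proof.
move=> q_gt0 d_gt0; have qd_gt0 : (0 < q * d)%N by rewrite muln_gt0 q_gt0.
rewrite !(@lam_prod_nat m _ (q * d).+1) ?ltnS ?leq_pmull ?leq_pmulr // -big_split.
by apply: eq_bigr => p _; rewrite lognM // mulnDr expnD.
Qed.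

Lemma residues_dvd_sub (zp : nat -> int) (p : nat) :
  (forall n, (zp n.+1 == zp n %[mod (p ^ n)%:Z])%Z) ->
  forall k n, (k <= n)%N -> ((p ^ k)%:Z %| zp n - zp k)%Z.
Proof.
move=> zp_compat k; elim=> [|n IHn]; first by rewrite leqn0 => /eqP ->; rewrite subrr.
rewrite leq_eqVlt => /orP[/eqP ->|]; first by rewrite subrr.
rewrite ltnS => le_kn; rewrite -[_ - zp k](subrKA (zp n)) rpredD ?IHn //.
have step : ((p ^ n)%:Z %| zp n.+1 - zp n)%Z by rewrite -eqz_mod_dvd zp_compat.
by apply: dvdz_trans step; rewrite dvdzE !absz_nat dvdn_exp2l.
Qed.

Section ResidueChoice.

Context {z : nat -> nat -> int} {r : nat -> int}.
Hypothesis z_compat : forall p n, prime p -> (z p n.+1 == z p n %[mod (p ^ n)%:Z])%Z.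
Hypothesis r_cong : forall d, (0 < d)%N -> forall p, prime p -> (p %| d)%N ->
  (r d == z p (logn p d) %[mod (p ^ logn p d)%:Z])%Z.

Lemma r_dvd_sub {d Q : nat} : (0 < Q)%N -> (d %| Q)%N -> (d%:Z %| r Q - r d)%Z.
Proof.
move=> Q_gt0 dvd_dQ; have d_gt0 : (0 < d)%N := dvdn_gt0 Q_gt0 dvd_dQ.
rewrite dvdzE absz_nat; apply/dvdn_partP => // p.
rewrite mem_primes => /and3P[p_pr _ p_dvd_d]; rewrite p_part -(absz_nat (p ^ _)) -dvdzE.
have le_log : (logn p d <= logn p Q)%N by apply: dvdn_leq_log.
have rQ_z : ((p ^ logn p Q)%:Z %| r Q - z p (logn p Q))%Z.
  by rewrite -eqz_mod_dvd r_cong // (dvdn_trans p_dvd_d).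
have rd_z : ((p ^ logn p d)%:Z %| r d - z p (logn p d))%Z by rewrite -eqz_mod_dvd r_cong.
have z_z : ((p ^ logn p d)%:Z %| z p (logn p Q) - z p (logn p d))%Z.
  by apply: residues_dvd_sub => // n; apply: z_compat.
have -> : r Q - r d = (r Q - z p (logn p Q)) + (z p (logn p Q) - z p (logn p d))
                      - (r d - z p (logn p d)) by ring.
apply: rpredB => //; apply: rpredD => //; apply: dvdz_trans rQ_z.
by rewrite dvdzE !absz_nat dvdn_exp2l.
Qed.

End ResidueChoice.

Lemma nu_ge0 (R : realType) (r : nat -> int) (d y : nat) : 0 <= nu R r d y.
Proof.
rewrite /nu; case: ifP => [/andP[_ /andP[t_gt0 _]]|_] //.
by rewrite mulr_ge0 ?divr_ge0 // ln_ge0 // ler1z.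
Qed.

Lemma indR_ge0 (R : realType) (B : set int) (t : rat) : 0 <= indR R B t.
Proof. by rewrite /indR; case: ifP. Qed.

Lemma indR_le (R : realType) (B B' : set int) (t t' : rat) :
  (forall u : int, t = u%:~R -> B u -> exists2 u' : int, t' = u'%:~R & B' u') ->
  indR R B t <= indR R B' t'.
Proof.
move=> BB'; rewrite /indR; case: asboolP => [[u t_eq Bu]|_]; last by case: ifP.
by rewrite asboolT //; apply: BB' t_eq Bu.
Qed.

Lemma indR_dilate (R : realType) (B B' : set int) (x : int) (c : nat) (t : rat) :
  (forall l, B' l -> B (x + l * c%:Z)) ->
  indR R B' t <= indR R B (x%:~R + c%:R * t).
Proof.
move=> B'B; apply: indR_le => l -> /B'B Bl; exists (x + l * c%:Z) => //.
by rewrite rmorphD rmorphM /= mulrC pmulrn.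
Qed.

Lemma le_esum_inj {R : realType} {T T' : choiceType} {P : set T} {Q : set T'}
    (f : T -> T') {a : T -> \bar R} {b : T' -> \bar R} :
  set_inj P f -> f @` P `<=` Q -> (forall j, Q j -> (0 <= b j)%E) ->
  (forall i, P i -> (a i <= b (f i))%E) ->
  (\esum_(i in P) a i <= \esum_(j in Q) b j)%E.
Proof.
move=> f_inj fPQ b_ge0 le_ab; apply: le_trans (le_esum le_ab) _.
rewrite -(esum_image P f b) // -(setIidr fPQ).
by rewrite esum_mkcondr; apply: le_esum => j Qj; case: ifP => // _; apply: b_ge0.
Qed.

Definition reindex (r : nat -> int) (q d y : nat) : nat :=
  absz (((r (q * d)%N - r d) %/ d%:Z)%Z + q%:Z * y%:Z).

Section Reindex.

Context {h : {poly int}} {m : nat -> nat} {r : nat -> int} {q d : nat}.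
Hypotheses (q_gt0 : (0 < q)%N) (d_gt0 : (0 < d)%N).
Hypotheses (rqd_gt : - (q * d)%N%:Z < r (q * d)%N) (rd_le0 : r d <= 0).
Hypothesis dvd_r : (d%:Z %| r (q * d)%N - r d)%Z.

Let k : int := ((r (q * d)%N - r d) %/ d%:Z)%Z.
Let g : nat -> nat := reindex r q d.

Lemma reindex_shift_gt0 (y : nat) : (0 < y)%N -> 0 < k + q%:Z * y%:Z.
Proof.
move=> y_gt0; have k_d : k * d%:Z = r (q * d)%N - r d := divzK dvd_r.
rewrite -(pmulr_rgt0 _ (_ : 0 < d%:Z)) ?ltz_nat // mulrDr [d%:Z * k]mulrC k_d.
move: rqd_gt; rewrite PoszM -lez_nat in y_gt0 *; nia.
Qed.

Lemma reindexE (y : nat) : (0 < y)%N -> (g y)%:Z = k + q%:Z * y%:Z.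
Proof. by move=> y_gt0; rewrite gez0_abs // ltW // reindex_shift_gt0. Qed.

Lemma reindex_gt0 (y : nat) : (0 < y)%N -> (0 < g y)%N.
Proof. by move=> y_gt0; rewrite -ltz_nat reindexE // reindex_shift_gt0. Qed.

Lemma reindex_inj : {in [pred y | 0 < y]%N &, injective g}.
Proof.
move=> y y' y_gt0 y'_gt0 /(congr1 Posz); rewrite !reindexE //.
by move=> /addrI /mulfI; rewrite eqz_nat -lt0n => /(_ q_gt0) [].
Qed.

Lemma reindex_progression (y : nat) : (0 < y)%N ->
  r d + d%:Z * (g y)%:Z = r (q * d)%N + (q * d)%N%:Z * y%:Z.
Proof.
move=> y_gt0; have k_d : k * d%:Z = r (q * d)%N - r d := divzK dvd_r.
by rewrite reindexE // mulrDr [d%:Z * k]mulrC k_d PoszM; ring.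
Qed.

Lemma hd_reindex (y : nat) : (0 < y)%N ->
  hd h r m d (g y) = (lam m q)%:R * hd h r m (q * d) y.
Proof.
move=> y_gt0; rewrite /hd reindex_progression // lamM // natrM.
have lq_neq0 : (lam m q)%:R != 0 :> rat by rewrite pnatr_eq0 -lt0n lam_gt0.
have ld_neq0 : (lam m d)%:R != 0 :> rat by rewrite pnatr_eq0 -lt0n lam_gt0.
by field; rewrite lq_neq0 ld_neq0.
Qed.

Lemma reindex_Hd {L L' y : nat} : (lam m q)%:R * L'%:R <= L%:R :> rat ->
  Hd h r m (q * d) L' y -> Hd h r m d L (g y).
Proof.
move=> le_L [y_gt0 [hd_gt0 hd_lt]]; rewrite /Hd /= hd_reindex //.
have lq_gt0 : 0 < (lam m q)%:R :> rat by rewrite ltr0n lam_gt0.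
have s_gt0 : 0 < (sconst h)%:R :> rat by rewrite ltr0n addn_gt0 orbT.
split; first exact: reindex_gt0.
split; first exact: mulr_gt0.
apply: lt_le_trans (_ : _ < (lam m q)%:R * (L'%:R / (sconst h)%:R)) _.
  by rewrite ltr_pM2l.
by rewrite mulrA ler_pM2r ?invr_gt0.
Qed.

Lemma nu_reindex_ge (R : realType) {y : nat} : (0 < y)%N ->
  nu R r (q * d) y <= nu R r d (g y).
Proof.
move=> y_gt0; rewrite /nu reindex_progression // y_gt0 reindex_gt0 //=.
case: ifP => // /andP[t_gt0 _]; apply: ler_wpM2r; last exact: totient_ratio_mul_le.
by rewrite ln_ge0 // ler1z.
Qed.

End Reindex.

Theorem proposition1 (R : realType) (h : {poly int})
  (z : nat -> nat -> int) (m : nat -> nat) (r : nat -> int)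
  (Hdeg : (2 <= (size h).-1)%N) (Hlead : 0 < lead_coef h)
  (Hz_compat : forall p n, prime p -> (z p n.+1 == z p n %[mod (p ^ n)%:Z])%Z)
  (Hz_root : forall p n, prime p -> ((p ^ n)%:Z %| h.[z p n])%Z)
  (Hz_unit : forall p, prime p -> ~~ ((p%:Z) %| z p 1%N)%Z)
  (Hm : forall p, prime p ->
     (forall j, (j < m p)%N -> forall n, ((p ^ n)%:Z %| (h^`N(j)).[z p n])%Z) /\
     ~ (forall n, ((p ^ n)%:Z %| (h^`N(m p)).[z p n])%Z))
  (Hr : forall d, (0 < d)%N ->
     [/\ - (d%:Z) < r d, r d <= 0 &
      forall p, prime p -> (p %| d)%N ->
        (r d == z p (logn p d) %[mod (p ^ logn p d)%:Z])%Z])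
  (L L' q : nat) (x : int)
  (HL : (0 < L)%N) (HL' : (0 < L')%N) (Hq : (0 < q)%N)
  (HLL' : (L'%:R : rat) <= L%:R / (lam m q)%:R)
  (B B' : set int)
  (HB : B `<=` [set t : int | 1 <= t <= L%:Z])
  (HB' : B' `<=` [set l : int | (1 <= l <= L'%:Z) /\ B (x + l * (lam m q)%:Z)]) :
  forall d : nat, (0 < d)%N ->
    (Rsum R h r m (q * d) B' L' <= Rsum R h r m d B L)%E.
Proof.
move=> d d_gt0; have qd_gt0 : (0 < q * d)%N by rewrite muln_gt0 Hq.
have [rqd_gt _ _] := Hr _ qd_gt0; have [_ rd_le0 _] := Hr _ d_gt0.
have dvd_r : (d%:Z %| r (q * d)%N - r d)%Z.
  have r_cong d' (d'_gt0 : (0 < d')%N) := let: And3 _ _ r_cong := Hr d' d'_gt0 in r_cong.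
  exact: (r_dvd_sub Hz_compat r_cong qd_gt0 (dvdn_mull q (dvdnn d))).
set lq := lam m q; set g := reindex r q d.
have g_inj := reindex_inj Hq d_gt0 rqd_gt rd_le0 dvd_r.
have le_L : lq%:R * L'%:R <= L%:R :> rat by rewrite mulrC -ler_pdivlMr ?ltr0n ?lam_gt0.
have B'B l : B' l -> B (x + l * lq%:Z) by move=> /HB'[].
rewrite /Rsum; apply: (le_esum_inj (fun xy : int * nat => (x + xy.1 * lq%:Z, g xy.2))).
- have lq_neq0 : lq%:Z != 0 by rewrite eqz_nat -lt0n lam_gt0.
  move=> [u y] [u' y']; rewrite !inE => -[y_gt0 _] [y'_gt0 _] [].
  by move=> /addrI/(mulIf lq_neq0) -> /g_inj ->.
- move=> _ [[u y] /= Hy <-].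
  exact: (reindex_Hd Hq d_gt0 rqd_gt rd_le0 dvd_r le_L Hy).
- by move=> ? _; rewrite lee_fin !mulr_ge0 ?indR_ge0 ?nu_ge0.
move=> [u y] /= [y_gt0 _]; rewrite lee_fin.
have nu_g := nu_reindex_ge Hq d_gt0 rqd_gt rd_le0 dvd_r R y_gt0.
have x_u : (x + u * lq%:Z)%:~R = x%:~R + lq%:R * u%:~R :> rat.
  by rewrite rmorphD rmorphM /= mulrC pmulrn.
rewrite ler_pM ?mulr_ge0 ?indR_ge0 ?nu_ge0 // ler_pM ?indR_ge0 // x_u ?indR_dilate //.
rewrite (hd_reindex Hq d_gt0 rqd_gt rd_le0 dvd_r) // -addrA -mulrDr.
exact: indR_dilate.
Qed.
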